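(* Let $K\subseteq[0,1]^n$ and let $f_1,\dots,f_k:K\to[0,1]$ be polynomially bounded on $K$. Then their sum $f:=f_1+\dots+f_k$ is polynomially bounded on $K$.
   Context: For a partition $[n]=A\sqcup S\sqcup B$, the open face is $F_{A,S,B}=\{p\in[0,1]^n: p_i=0\ (i\in A),\ 0<p_i<1\ (i\in S),\ p_i=1\ (i\in B)\}$. For $T\subseteq[n]$, $p^T=\prod_{i\in T}p_i$, $(1-p)^T=\prod_{i\in T}(1-p_i)$. A nonnegative function $h$ on $K$ is polynomially bounded on $K$ if there exist an integer $m\ge0$ and a real $c>0$ such that for every open face $F_{A,S,B}$: if some $q\in K\cap F_{A,S,B}$ has $h(q)>0$, then $h(p)\ge c\left((1-p)^A p^S(1-p)^S p^B\right)^m$ for all $p\in K$. *)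

From mathcomp Require Import all_boot all_order all_algebra.
Set Implicit Arguments. Unset Strict Implicit. Unset Printing Implicit Defensive.
Import Order.TTheory GRing.Theory Num.Theory.
Local Open Scope ring_scope.

Definition in_cube (R : realFieldType) (n : nat) (p : 'I_n -> R) : Prop :=
  forall i, 0 <= p i <= 1.

Definition is_partition3 (n : nat) (A S B : {set 'I_n}) : Prop :=
  [disjoint A & S] /\ [disjoint A & B] /\ [disjoint S & B] /\
  A :|: S :|: B = [set: 'I_n].

Definition in_face (R : realFieldType) (n : nat) (A S B : {set 'I_n})
  (p : 'I_n -> R) : Prop :=
  (forall i, i \in A -> p i = 0) /\
  (forall i, i \in S -> 0 < p i < 1) /\
  (forall i, i \in B -> p i = 1).

Definition face_monomial (R : realFieldType) (n : nat) (A S B : {set 'I_n})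
  (p : 'I_n -> R) : R :=
  (\prod_(i in A) (1 - p i)) * (\prod_(i in S) p i) *
  (\prod_(i in S) (1 - p i)) * (\prod_(i in B) p i).

Definition poly_bounded (R : realFieldType) (n : nat) (K : ('I_n -> R) -> Prop)
  (h : ('I_n -> R) -> R) : Prop :=
  exists (m : nat) (c : R), 0 < c /\
    forall A S B : {set 'I_n}, is_partition3 A S B ->
      (exists q, K q /\ in_face A S B q /\ 0 < h q) ->
      forall p, K p -> c * (face_monomial A S B p) ^+ m <= h p.

From mathcomp Require Import all_boot all_order all_algebra lra.
Set Implicit Arguments. Unset Strict Implicit. Unset Printing Implicit Defensive.
Import Order.TTheory GRing.Theory Num.Theory.
Local Open Scope ring_scope.

(* On the cube every face monomial lies in [0, 1], so raising the exponent and
   shrinking the constant only weaken a bound [c * M ^+ m <= h].  Hence finitely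
   many polynomially bounded functions admit common constants: the largest
   exponent and the smallest constant.  The sum [f] dominates every summand
   (they are nonnegative), and wherever [f] is positive on a face some summand
   is positive there, so the common bound of that summand bounds [f]. *)

Section UnitInterval.
Variable R : realFieldType.

Lemma mulr_itv01 (x y : R) : 0 <= x <= 1 -> 0 <= y <= 1 -> 0 <= x * y <= 1.
Proof.
move=> /andP[x0 x1] /andP[y0 y1].
by rewrite mulr_ge0 //= mulr_ile1.
Qed.

Lemma prodr_itv01 (I : finType) (P : pred I) (F : I -> R) :
  (forall i, 0 <= F i <= 1) -> 0 <= \prod_(i | P i) F i <= 1.
Proof.
move=> F01; apply: (big_ind (fun x => 0 <= x <= 1)) => //.
- by rewrite ler01 lexx.
- exact: mulr_itv01.
Qed.

End UnitInterval.

Section FaceBounds.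
Variables (R : realFieldType) (n : nat).
Implicit Types (K : ('I_n -> R) -> Prop) (h : ('I_n -> R) -> R) (p : 'I_n -> R).

Lemma face_monomial_itv01 (A S B : {set 'I_n}) p :
  in_cube p -> 0 <= face_monomial A S B p <= 1.
Proof.
move=> p01.
have q01 i : 0 <= 1 - p i <= 1 by have /andP[? ?] := p01 i; apply/andP; split; lra.
by rewrite /face_monomial !mulr_itv01 // prodr_itv01.
Qed.

Lemma face_monomial_bound_le (A S B : {set 'I_n}) p (m m' : nat) (c c' : R) :
  in_cube p -> (m <= m')%N -> 0 <= c' <= c ->
  c' * face_monomial A S B p ^+ m' <= c * face_monomial A S B p ^+ m.
Proof.
move=> /(face_monomial_itv01 A S B) /andP[M0 M1] le_m /andP[c'0 le_c].
by rewrite ler_pM ?exprn_ge0 // ler_wiXn2l.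
Qed.

Definition face_bound K h (m : nat) (c : R) : Prop :=
  forall A S B : {set 'I_n}, is_partition3 A S B ->
    (exists q, K q /\ in_face A S B q /\ 0 < h q) ->
    forall p, K p -> c * face_monomial A S B p ^+ m <= h p.

Lemma face_bound_weaken K h (m m' : nat) (c c' : R) :
  (forall p, K p -> in_cube p) -> (m <= m')%N -> 0 <= c' <= c ->
  face_bound K h m c -> face_bound K h m' c'.
Proof.
move=> Kcube le_m le_c hb A S B part supp p Kp.
apply: le_trans (hb A S B part supp p Kp).
exact: face_monomial_bound_le (Kcube p Kp) le_m le_c.
Qed.

Lemma poly_bounded_common (I : finType) K (g : I -> ('I_n -> R) -> R) :
  (forall p, K p -> in_cube p) -> (forall j, poly_bounded K (g j)) ->
  exists (m : nat) (c : R), 0 < c /\ forall j, face_bound K (g j) m c.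
Proof.
move=> Kcube gb.
have /fin_all_exists [m gb_m] := gb.
have /fin_all_exists [c gb_mc] := gb_m.
exists (\max_j m j), (\big[Num.min/1]_j c j); split.
  by apply: lt_bigmin => // j _; case: (gb_mc j).
move=> j; have [c_gt0 hb] := gb_mc j.
apply: face_bound_weaken hb => //; first exact: leq_bigmax.
by rewrite bigmin_le andbT; apply: le_bigmin => // i _; case: (gb_mc i) => /ltW.
Qed.

Lemma poly_bounded_dominated (I : finType) K (g : I -> ('I_n -> R) -> R) h :
  (forall p, K p -> in_cube p) ->
  (forall j p, K p -> g j p <= h p) ->
  (forall q, K q -> 0 < h q -> exists j, 0 < g j q) ->
  (forall j, poly_bounded K (g j)) -> poly_bounded K h.
Proof.
move=> Kcube g_le_h supp_h gb.
have [m [c [c_gt0 hb]]] := poly_bounded_common Kcube gb.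
exists m, c; split => // A S B part [q [Kq [Fq hq]]] p Kp.
have [j gjq] := supp_h q Kq hq.
apply: le_trans (g_le_h j p Kp).
by apply: (hb j A S B part _ p Kp); exists q.
Qed.

End FaceBounds.

Theorem lemma11 (R : realFieldType) (n k : nat) (K : ('I_n -> R) -> Prop)
  (f : 'I_k -> ('I_n -> R) -> R) :
  (forall p, K p -> in_cube p) ->
  (forall j p, K p -> 0 <= f j p <= 1) ->
  (forall j, poly_bounded K (f j)) ->
  poly_bounded K (fun p => \sum_(j < k) f j p).
Proof.
move=> Kcube f01 fb.
have f_ge0 j p : K p -> 0 <= f j p by move=> /(f01 j) /andP[].
apply: (poly_bounded_dominated Kcube _ _ fb) => [j p Kp | q Kq].
  by rewrite (bigD1 j) //= lerDl sumr_ge0 // => i _; apply: f_ge0.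
move=> sum_gt0; apply/existsP; apply: contraLR sum_gt0 => /existsPn no_pos.
by rewrite -leNgt sumr_le0 // => j _; rewrite leNgt no_pos.
Qed.
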